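(* In the instance constructed below, consider any feasible 2DKR packing (rotations allowed) that contains $2k$ rectangles. Then it does not contain both a horizontally oriented and a vertically oriented rectangle; i.e., either all packed rectangles are vertically oriented or all are horizontally oriented.
   Context: Let $k\ge 9$ be an odd integer and $\mathcal A$ a multiset of $n$ positive integers; let $M=\max_{a\in\mathcal A}a$ and $N=2Mk^4$, $K=[0,N]\times[0,N]$. For each element $a$ of $\mathcal A$ (counted with multiplicity) create two items (rectangles) $R_a$ with width $w(R_a)=N/k+a$ and height $h(R_a)=N/2-a$, and $R'_a$ with width $w(R'_a)=N/k-a$ and height $h(R'_a)=N/2+a$, each of profit $1$. A feasible 2DKR packing places a subset of the items as pairwise disjoint open axis-parallel rectangles inside $K$, each either unrotated or rotated by $90^\circ$. A packed rectangle $i$ is oriented vertically if it is placed unrotated (placed width $w(i)$, placed height $h(i)$, which here satisfies placed height $>$ placed width), and oriented horizontally otherwise. *)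

From Stdlib Require Import Reals List Arith Lia.
Open Scope R_scope.

(* The multiset A of n positive integers is a list of naturals (order irrelevant);
   element i of A is (nth i A 0), for i < length A. *)
Definition maxA (A : list nat) : nat := fold_right Nat.max 0%nat A.

Definition bigN (k : nat) (A : list nat) : R := INR (2 * maxA A * k ^ 4).

(* An item is (i, b): i indexes an element a of A (counted with multiplicity);
   b = false is R_a, b = true is R'_a. *)
Definition item : Type := (nat * bool)%type.

Definition elt (A : list nat) (it : item) : R := INR (nth (fst it) A 0%nat).

Definition item_w (k : nat) (A : list nat) (it : item) : R :=
  if snd it then bigN k A / INR k - elt A it else bigN k A / INR k + elt A it.

Definition item_h (k : nat) (A : list nat) (it : item) : R :=
  if snd it then bigN k A / 2 + elt A it else bigN k A / 2 - elt A it.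

Record placement : Type := mkPlacement {
  pl_item : item; pl_x : R; pl_y : R; pl_rot : bool }.

Definition placed_w (k : nat) (A : list nat) (p : placement) : R :=
  if pl_rot p then item_h k A (pl_item p) else item_w k A (pl_item p).
Definition placed_h (k : nat) (A : list nat) (p : placement) : R :=
  if pl_rot p then item_w k A (pl_item p) else item_h k A (pl_item p).

Definition in_open (k : nat) (A : list nat) (p : placement) (px py : R) : Prop :=
  pl_x p < px < pl_x p + placed_w k A p /\ pl_y p < py < pl_y p + placed_h k A p.

Definition inside_K (k : nat) (A : list nat) (p : placement) : Prop :=
  0 <= pl_x p /\ pl_x p + placed_w k A p <= bigN k A /\
  0 <= pl_y p /\ pl_y p + placed_h k A p <= bigN k A.

Definition feasible_packing (k : nat) (A : list nat) (P : list placement) : Prop :=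
  NoDup (map pl_item P) /\
  (forall p, In p P -> (fst (pl_item p) < length A)%nat) /\
  (forall p, In p P -> inside_K k A p) /\
  (forall i j, (i < length P)%nat -> (j < length P)%nat -> i <> j ->
     forall p q, nth_error P i = Some p -> nth_error P j = Some q ->
     ~ (exists px py, in_open k A p px py /\ in_open k A q px py)).

Definition vertical (p : placement) : Prop := pl_rot p = false.
Definition horizontal (p : placement) : Prop := pl_rot p = true.

(* Count the lattice points of [{0..N}^2] covered by no rectangle.  The 2k rectangles
   have area almost (N/k)(N/2) each, so at most O(M^2 k^5) points stay uncovered.
   A row crossing both a horizontal (width about N/2) and a vertical (width about N/k)
   rectangle contains exactly one horizontal and at most (k-1)/2 vertical ones, so it
   misses about N/(2k) points; the same holds for columns.  Take a vertical p and a
   horizontal q.  Either half of the rows of p are crossed by horizontal rectangles,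
   or half of the columns of q are crossed by vertical ones, or at least N/4 free rows
   of p meet at least N/4 free columns of q, and each such intersection point is
   uncovered.  Each alternative exceeds the area bound. *)

From Stdlib Require Import Bool Reals List Lia Lra Psatz.
Open Scope R_scope.
Local Open Scope bool_scope.

Fixpoint rsum {T : Type} (l : list T) (f : T -> R) : R :=
  match l with nil => 0 | x :: l' => f x + rsum l' f end.

Definition b2R (b : bool) : R := if b then 1 else 0.

Section Rsum.
Context {T U : Type}.
Implicit Types (l : list T) (f g : T -> R).

Lemma rsum_app l1 l2 f : rsum (l1 ++ l2) f = rsum l1 f + rsum l2 f.
Proof. induction l1 as [|x l1 IH]; simpl; lra. Qed.

Lemma rsum_ext l f g : (forall x, In x l -> f x = g x) -> rsum l f = rsum l g.
Proof. induction l as [|x l IH]; simpl; intros H; [lra|]. rewrite H, IH; auto. Qed.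

Lemma rsum_le l f g : (forall x, In x l -> f x <= g x) -> rsum l f <= rsum l g.
Proof.
  induction l as [|x l IH]; simpl; intros H; [lra|].
  assert (f x <= g x) by auto. assert (rsum l f <= rsum l g) by auto. lra.
Qed.

Lemma rsum_add l f g : rsum l (fun x => f x + g x) = rsum l f + rsum l g.
Proof. induction l as [|x l IH]; simpl; lra. Qed.

Lemma rsum_sub l f g : rsum l (fun x => f x - g x) = rsum l f - rsum l g.
Proof. induction l as [|x l IH]; simpl; lra. Qed.

Lemma rsum_scal l c f : rsum l (fun x => c * f x) = c * rsum l f.
Proof. induction l as [|x l IH]; simpl; lra. Qed.

Lemma rsum_const l c : rsum l (fun _ => c) = INR (length l) * c.
Proof. induction l as [|x l IH]; simpl rsum; simpl length; rewrite ?S_INR; simpl; lra. Qed.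

Lemma rsum_map (h : U -> T) (l : list U) f : rsum (map h l) f = rsum l (fun y => f (h y)).
Proof. induction l as [|y l IH]; simpl; congruence. Qed.

Lemma rsum_nonneg l f : (forall x, In x l -> 0 <= f x) -> 0 <= rsum l f.
Proof. intros H. replace 0 with (rsum l (fun _ => 0)) by (rewrite rsum_const; lra). now apply rsum_le. Qed.

Lemma rsum_length_bounds l f a b : (forall x, In x l -> a <= f x <= b) ->
  INR (length l) * a <= rsum l f <= INR (length l) * b.
Proof.
  intros H. rewrite <- !rsum_const. split; apply rsum_le; intros x Hx; apply H, Hx.
Qed.

Lemma length_pos_of_In (x : T) l : In x l -> (1 <= length l)%nat.
Proof. destruct l as [|y l]; simpl; [contradiction | lia]. Qed.

Lemma rsum_filter (b : T -> bool) l f : rsum (filter b l) f = rsum l (fun x => b2R (b x) * f x).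
Proof. induction l as [|x l IH]; simpl; [lra|]. destruct (b x); simpl; rewrite IH; lra. Qed.

Lemma rsum_filter_split (b : T -> bool) l f :
  rsum l f = rsum (filter b l) f + rsum (filter (fun x => negb (b x)) l) f.
Proof. induction l as [|x l IH]; simpl; [lra|]. destruct (b x); simpl; rewrite IH; lra. Qed.

End Rsum.

Lemma rsum_comm {T U : Type} (l : list T) (l' : list U) (F : T -> U -> R) :
  rsum l (fun x => rsum l' (F x)) = rsum l' (fun y => rsum l (fun x => F x y)).
Proof.
  induction l as [|x l IH]; simpl.
  - rewrite rsum_const; lra.
  - now rewrite IH, <- rsum_add.
Qed.

Lemma rsum_mul {T U : Type} (l : list T) (l' : list U) (f : T -> R) (g : U -> R) :
  rsum l f * rsum l' g = rsum l (fun x => rsum l' (fun y => f x * g y)).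
Proof.
  rewrite Rmult_comm, <- rsum_scal. apply rsum_ext; intros x _.
  rewrite Rmult_comm, <- rsum_scal. apply rsum_ext; intros; lra.
Qed.

Lemma rsum_telescope n (f : nat -> R) : rsum (seq 0 n) (fun i => f (S i) - f i) = f n - f O.
Proof. induction n as [|n IH]; [simpl; lra|]. rewrite seq_S, rsum_app, IH. simpl; lra. Qed.

Lemma b2R_bounds b : 0 <= b2R b <= 1.
Proof. destruct b; simpl; lra. Qed.

Definition Rltb (a b : R) : bool := if Rlt_dec a b then true else false.

Definition in_open_interval (a w x : R) : bool := Rltb a x && Rltb x (a + w).

Lemma in_open_interval_true a w x : in_open_interval a w x = true <-> a < x < a + w.
Proof.
  unfold in_open_interval, Rltb.
  destruct (Rlt_dec a x), (Rlt_dec x (a + w)); simpl; split; intros; try lra; easy.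
Qed.

Lemma in_open_interval_false a w x : in_open_interval a w x = false -> x <= a \/ a + w <= x.
Proof.
  unfold in_open_interval, Rltb.
  destruct (Rlt_dec a x), (Rlt_dec x (a + w)); simpl; intros; easy || lra.
Qed.

Definition grid (n : nat) : list nat := seq 0 (S n).

Lemma rsum_grid_const n c : rsum (grid n) (fun _ => c) = (INR n + 1) * c.
Proof. rewrite rsum_const. unfold grid. now rewrite length_seq, S_INR. Qed.

Definition grid_count (n : nat) (f : nat -> bool) : R := rsum (grid n) (fun i => b2R (f i)).

Lemma grid_count_nonneg n f : 0 <= grid_count n f.
Proof. apply rsum_nonneg; intros; apply b2R_bounds. Qed.

Lemma grid_count_split n f g :
  grid_count n f = grid_count n (fun i => f i && g i) + grid_count n (fun i => f i && negb (g i)).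
Proof.
  unfold grid_count. rewrite <- rsum_add. apply rsum_ext; intros i _.
  destruct (f i), (g i); simpl; lra.
Qed.

Definition lattice_count (n : nat) (a w : R) : R :=
  grid_count n (fun x => in_open_interval a w (INR x)).

Definition clamp (lo hi x : R) : R := Rmin (Rmax x lo) hi.

Ltac solve_clamp := unfold clamp, Rmin, Rmax; repeat destruct Rle_dec; lra.

(* Both bounds compare the count with a telescoping sum of a clamped identity,
   each of whose unit steps is dominated by (resp. dominates) the indicator. *)
Lemma lattice_count_ge n a w : 0 <= a -> a + w <= INR n -> w - 1 <= lattice_count n a w.
Proof.
  intros Ha Hw. pose proof (grid_count_nonneg n (fun x => in_open_interval a w (INR x))).
  unfold lattice_count, grid_count, grid in *.
  destruct (Rlt_dec w 1) as [Hw1|Hw1]; [lra|].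
  set (c := clamp (a + 1) (a + w)).
  replace (w - 1) with (rsum (seq 0 (S n)) (fun x => c (INR (S x)) - c (INR x))).
  - apply rsum_le; intros x _. rewrite S_INR. unfold c.
    destruct (in_open_interval a w (INR x)) eqn:E; simpl.
    + apply in_open_interval_true in E. solve_clamp.
    + apply in_open_interval_false in E. solve_clamp.
  - rewrite (rsum_telescope (S n) (fun x => c (INR x))), S_INR. simpl INR. unfold c. solve_clamp.
Qed.

Lemma lattice_count_le n a w : 0 <= w -> lattice_count n a w <= w + 1.
Proof.
  intros Hw. unfold lattice_count, grid_count, grid.
  set (c := clamp a (a + w + 1)).
  apply Rle_trans with (rsum (seq 0 (S n)) (fun x => c (INR (S x)) - c (INR x))).
  - apply rsum_le; intros x _. rewrite S_INR. unfold c.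
    destruct (in_open_interval a w (INR x)) eqn:E; simpl.
    + apply in_open_interval_true in E. solve_clamp.
    + solve_clamp.
  - rewrite (rsum_telescope (S n) (fun x => c (INR x))). unfold c. solve_clamp.
Qed.

Lemma lattice_count_between n a w lo hi : 0 <= a -> a + w <= INR n -> 0 <= lo -> lo <= w <= hi ->
  lo - 1 <= lattice_count n a w <= hi + 1.
Proof.
  intros Ha Haw Hlo Hw.
  pose proof (lattice_count_ge n a w Ha Haw). pose proof (lattice_count_le n a w ltac:(lra)). lra.
Qed.

Section Coverage.
Variables (k : nat) (A : list nat).

Definition memX (r : placement) (x : nat) : bool :=
  in_open_interval (pl_x r) (placed_w k A r) (INR x).
Definition memY (r : placement) (y : nat) : bool :=
  in_open_interval (pl_y r) (placed_h k A r) (INR y).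

Definition coverage (P : list placement) (x y : nat) : R :=
  rsum P (fun r => b2R (memX r x) * b2R (memY r y)).

Definition pairwise_disjoint (P : list placement) : Prop :=
  forall i j, (i < length P)%nat -> (j < length P)%nat -> i <> j ->
  forall p q, nth_error P i = Some p -> nth_error P j = Some q ->
  ~ (exists px py, in_open k A p px py /\ in_open k A q px py).

Lemma pairwise_disjoint_cons p P : pairwise_disjoint (p :: P) -> pairwise_disjoint P.
Proof. intros H i j Hi Hj Hij. apply (H (S i) (S j)); simpl; lia. Qed.

Lemma coverage_le_1 P x y : pairwise_disjoint P -> coverage P x y <= 1.
Proof.
  unfold coverage. induction P as [|p P IH]; intros Hdisj; simpl; [lra|].
  specialize (IH (pairwise_disjoint_cons p P Hdisj)).
  destruct (memX p x) eqn:Ex, (memY p y) eqn:Ey; simpl; try lra.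
  enough (rsum P (fun r => b2R (memX r x) * b2R (memY r y)) = 0) by lra.
  rewrite <- (Rmult_0_r (INR (length P))), <- rsum_const.
  apply rsum_ext; intros q Hq.
  destruct (memX q x) eqn:Fx, (memY q y) eqn:Fy; simpl; try lra.
  destruct (In_nth_error _ _ Hq) as [j Hj].
  assert (j < length P)%nat by (apply nth_error_Some; congruence).
  exfalso. apply (Hdisj O (S j)) with p q; simpl; auto; try lia.
  unfold memX, memY in *. rewrite in_open_interval_true in Ex, Ey, Fx, Fy.
  exists (INR x), (INR y). unfold in_open. tauto.
Qed.

Lemma row_coverage n P y :
  rsum (grid n) (fun x => coverage P x y) =
  rsum (filter (fun r => memY r y) P) (fun r => lattice_count n (pl_x r) (placed_w k A r)).
Proof.
  unfold coverage, lattice_count, grid_count. rewrite rsum_comm, rsum_filter.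
  apply rsum_ext; intros r _. rewrite <- rsum_scal. apply rsum_ext; intros. unfold memX. ring.
Qed.

Lemma total_coverage n P :
  rsum (grid n) (fun x => rsum (grid n) (fun y => coverage P x y)) =
  rsum P (fun r => lattice_count n (pl_x r) (placed_w k A r) *
                   lattice_count n (pl_y r) (placed_h k A r)).
Proof.
  unfold coverage.
  rewrite (rsum_ext _ _ (fun x => rsum P (fun r => rsum (grid n) (fun y => b2R (memX r x) * b2R (memY r y)))))
    by (intros; apply rsum_comm).
  rewrite rsum_comm. apply rsum_ext; intros r _. symmetry. apply rsum_mul.
Qed.

Definition crosses_row_horizontally (P : list placement) (y : nat) : bool :=
  existsb (fun r => pl_rot r && memY r y) P.
Definition crosses_col_vertically (P : list placement) (x : nat) : bool :=
  existsb (fun r => negb (pl_rot r) && memX r x) P.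

(* A horizontal rectangle containing (x, y) crosses row y, a vertical one crosses column x. *)
Lemma coverage_free P x y :
  crosses_row_horizontally P y = false -> crosses_col_vertically P x = false ->
  coverage P x y = 0.
Proof.
  unfold crosses_row_horizontally, crosses_col_vertically. intros Hrow Hcol.
  unfold coverage. rewrite <- (Rmult_0_r (INR (length P))), <- rsum_const.
  apply rsum_ext; intros r Hr.
  destruct (pl_rot r) eqn:Erot.
  - destruct (memY r y) eqn:Ey; [|simpl; lra].
    enough (existsb (fun r => pl_rot r && memY r y) P = true) by congruence.
    apply existsb_exists. exists r. now rewrite Erot, Ey.
  - destruct (memX r x) eqn:Ex; [|simpl; lra].
    enough (existsb (fun r => negb (pl_rot r) && memX r x) P = true) by congruence.
    apply existsb_exists. exists r. now rewrite Erot, Ex.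
Qed.

Definition transpose (r : placement) : placement :=
  mkPlacement (pl_item r) (pl_y r) (pl_x r) (negb (pl_rot r)).

Lemma placed_w_transpose r : placed_w k A (transpose r) = placed_h k A r.
Proof. unfold placed_w, placed_h, transpose; simpl. now destruct (pl_rot r). Qed.

Lemma placed_h_transpose r : placed_h k A (transpose r) = placed_w k A r.
Proof. unfold placed_w, placed_h, transpose; simpl. now destruct (pl_rot r). Qed.

Lemma memX_transpose r x : memX (transpose r) x = memY r x.
Proof. unfold memX, memY. now rewrite placed_w_transpose. Qed.

Lemma memY_transpose r y : memY (transpose r) y = memX r y.
Proof. unfold memX, memY. now rewrite placed_h_transpose. Qed.

Lemma coverage_transpose P x y : coverage (map transpose P) y x = coverage P x y.
Proof.
  unfold coverage. rewrite rsum_map. apply rsum_ext; intros r _.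
  rewrite memX_transpose, memY_transpose. lra.
Qed.

End Coverage.

Section NearlyUniformPackings.
Variables (k : nat) (A : list nat) (n t : nat) (s L M : R).

Definition well_placed (r : placement) : Prop :=
  0 <= pl_x r /\ pl_x r + placed_w k A r <= INR n /\
  0 <= pl_y r /\ pl_y r + placed_h k A r <= INR n /\
  (vertical r -> s - M <= placed_w k A r <= s + M /\ L - M <= placed_h k A r <= L + M) /\
  (horizontal r -> L - M <= placed_w k A r <= L + M /\ s - M <= placed_h k A r <= s + M).

Lemma well_placed_transpose r : well_placed r -> well_placed (transpose r).
Proof.
  unfold well_placed, vertical, horizontal.
  rewrite placed_w_transpose, placed_h_transpose. simpl.
  destruct (pl_rot r); simpl; intuition discriminate.
Qed.

Hypothesis short_side_ge_1 : 1 <= s - M.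
Hypothesis short_le_long : s <= L.
(* Hence a row crossed by rectangles of both orientations holds exactly one horizontal
   and at most t vertical ones. *)
Hypothesis two_long_too_wide : INR n + 1 < 2 * (L - M - 1) + (s - M - 1).
Hypothesis many_short_too_wide : INR n + 1 < (L - M - 1) + (INR t + 1) * (s - M - 1).

Definition row_gap : R := INR n + 1 - (L + M + 1) - INR t * (s + M + 1).

Lemma one_long_few_short (h v : nat) (c : R) :
  (1 <= h)%nat -> (1 <= v)%nat ->
  INR h * (L - M - 1) + INR v * (s - M - 1) <= c -> c <= INR n + 1 ->
  h = 1%nat /\ (v <= t)%nat.
Proof.
  intros Hh1 Hv1 Hlow Hc.
  assert (Hh : h = 1%nat).
  { destruct (Nat.le_gt_cases h 1) as [H|H]; [lia|].
    assert (2 <= INR h) by (apply (le_INR 2); lia).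
    assert (1 <= INR v) by (apply (le_INR 1); lia). nra. }
  split; [exact Hh|].
  destruct (Nat.le_gt_cases v t) as [H|H]; [exact H|].
  assert (INR t + 1 <= INR v) by (rewrite <- S_INR; apply le_INR; lia).
  subst h. simpl INR in Hlow. nra.
Qed.

Lemma row_uncovered P y :
  (forall r, In r P -> well_placed r) -> (forall x, coverage k A P x y <= 1) ->
  (exists q, In q P /\ horizontal q /\ memY k A q y = true) ->
  (exists p, In p P /\ vertical p /\ memY k A p y = true) ->
  row_gap <= rsum (grid n) (fun x => 1 - coverage k A P x y).
Proof.
  intros Hwp Hcov [q [Hq [Hqh Hqy]]] [p [Hp [Hpv Hpy]]].
  set (cnt := fun r => lattice_count n (pl_x r) (placed_w k A r)).
  set (crossing := filter (fun r => memY k A r y) P).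
  set (hs := filter (fun r => pl_rot r) crossing).
  set (vs := filter (fun r => negb (pl_rot r)) crossing).
  set (covered := rsum (grid n) (fun x => coverage k A P x y)).
  assert (Hsplit : covered = rsum hs cnt + rsum vs cnt)
    by (unfold covered; rewrite row_coverage; apply rsum_filter_split).
  assert (Hle : covered <= INR n + 1).
  { rewrite <- (Rmult_1_r (INR n + 1)), <- rsum_grid_const. now apply rsum_le. }
  assert (Hin : forall r b, In r (filter (fun r => b (pl_rot r)) crossing) ->
                  In r P /\ b (pl_rot r) = true).
  { intros r b Hr. apply filter_In in Hr as [Hr Hb]. apply filter_In in Hr. tauto. }
  assert (Hhs : forall r, In r hs -> L - M - 1 <= cnt r <= L + M + 1).
  { intros r Hr. destruct (Hin r (fun b => b) Hr) as [HrP Hrot].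
    destruct (Hwp r HrP) as (? & ? & _ & _ & _ & Hhor).
    apply lattice_count_between; auto; [lra|]. now apply Hhor. }
  assert (Hvs : forall r, In r vs -> s - M - 1 <= cnt r <= s + M + 1).
  { intros r Hr. destruct (Hin r negb Hr) as [HrP Hrot].
    destruct (Hwp r HrP) as (? & ? & _ & _ & Hver & _).
    apply lattice_count_between; auto; [lra|]. apply Hver. unfold vertical. now destruct (pl_rot r). }
  apply rsum_length_bounds in Hhs, Hvs.
  assert (Hqhs : In q hs) by (apply filter_In; split; [apply filter_In|]; auto).
  assert (Hpvs : In p vs).
  { apply filter_In; split; [apply filter_In|]; auto. unfold vertical in Hpv. now rewrite Hpv. }
  destruct (one_long_few_short (length hs) (length vs) covered) as [Hh Hv];
    [now apply length_pos_of_In with q | now apply length_pos_of_In with p | lra | exact Hle |].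
  apply le_INR in Hv. rewrite Hh in Hhs. simpl INR in Hhs.
  rewrite rsum_sub, rsum_grid_const. fold covered. unfold row_gap. nra.
Qed.

Lemma col_uncovered P x :
  (forall r, In r P -> well_placed r) -> (forall y, coverage k A P x y <= 1) ->
  (exists q, In q P /\ vertical q /\ memX k A q x = true) ->
  (exists p, In p P /\ horizontal p /\ memX k A p x = true) ->
  row_gap <= rsum (grid n) (fun y => 1 - coverage k A P x y).
Proof.
  intros Hwp Hcov [q [Hq [Hqv Hqx]]] [p [Hp [Hph Hpx]]].
  rewrite (rsum_ext _ _ (fun y => 1 - coverage k A (map transpose P) y x))
    by (intros; now rewrite coverage_transpose).
  apply row_uncovered.
  - intros r' Hr'. apply in_map_iff in Hr' as [r [<- Hr]]. now apply well_placed_transpose, Hwp.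
  - intros y. rewrite coverage_transpose. apply Hcov.
  - exists (transpose q). rewrite memY_transpose. unfold vertical, horizontal in *.
    simpl. rewrite Hqv. auto using in_map.
  - exists (transpose p). rewrite memY_transpose. unfold vertical, horizontal in *.
    simpl. rewrite Hph. auto using in_map.
Qed.

Definition uncovered (P : list placement) : R :=
  rsum (grid n) (fun x => rsum (grid n) (fun y => 1 - coverage k A P x y)).

Lemma uncovered_le_area P : (forall r, In r P -> well_placed r) ->
  uncovered P <= (INR n + 1) * (INR n + 1) - INR (length P) * ((s - M - 1) * (L - M - 1)).
Proof.
  intros Hwp. unfold uncovered.
  rewrite (rsum_ext _ _ (fun x => (INR n + 1) - rsum (grid n) (fun y => coverage k A P x y)))
    by (intros; now rewrite rsum_sub, rsum_grid_const, Rmult_1_r).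
  rewrite rsum_sub, rsum_grid_const.
  enough (INR (length P) * ((s - M - 1) * (L - M - 1)) <=
          rsum (grid n) (fun x => rsum (grid n) (fun y => coverage k A P x y))) by lra.
  rewrite total_coverage.
  rewrite <- rsum_const. apply rsum_le. intros r Hr.
  destruct (Hwp r Hr) as (Hx0 & Hx1 & Hy0 & Hy1 & Hver & Hhor).
  pose proof (lattice_count_ge n _ _ Hx0 Hx1). pose proof (lattice_count_ge n _ _ Hy0 Hy1).
  destruct (pl_rot r) eqn:Erot.
  - destruct (Hhor Erot). rewrite (Rmult_comm (s - M - 1)). apply Rmult_le_compat; lra.
  - destruct (Hver Erot). apply Rmult_le_compat; lra.
Qed.

Lemma uncovered_ge_crossed_rows P p :
  (forall r, In r P -> well_placed r) -> (forall x y, coverage k A P x y <= 1) ->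
  In p P -> vertical p ->
  row_gap * grid_count n (fun y => memY k A p y && crosses_row_horizontally k A P y)
    <= uncovered P.
Proof.
  intros Hwp Hcov Hp Hpv.
  unfold uncovered, grid_count. rewrite rsum_comm, <- rsum_scal. apply rsum_le; intros y _.
  destruct (memY k A p y && crosses_row_horizontally k A P y) eqn:E; simpl b2R.
  - apply andb_prop in E as [Epy Ecross].
    apply existsb_exists in Ecross as [r [Hr Er]]. apply andb_prop in Er as [Erot Ery].
    rewrite Rmult_1_r. apply row_uncovered; eauto.
  - rewrite Rmult_0_r. apply rsum_nonneg; intros x _. specialize (Hcov x y). lra.
Qed.

Lemma uncovered_ge_crossed_cols P q :
  (forall r, In r P -> well_placed r) -> (forall x y, coverage k A P x y <= 1) ->
  In q P -> horizontal q ->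
  row_gap * grid_count n (fun x => memX k A q x && crosses_col_vertically k A P x)
    <= uncovered P.
Proof.
  intros Hwp Hcov Hq Hqh.
  unfold uncovered, grid_count. rewrite <- rsum_scal. apply rsum_le; intros x _.
  destruct (memX k A q x && crosses_col_vertically k A P x) eqn:E; simpl b2R.
  - apply andb_prop in E as [Eqx Ecross].
    apply existsb_exists in Ecross as [r [Hr Er]]. apply andb_prop in Er as [Erot Erx].
    rewrite Rmult_1_r. apply col_uncovered; eauto.
    exists r. unfold vertical. destruct (pl_rot r); easy.
  - rewrite Rmult_0_r. apply rsum_nonneg; intros y _. specialize (Hcov x y). lra.
Qed.

Lemma uncovered_ge_free P (cols rows : nat -> bool) :
  (forall x y, coverage k A P x y <= 1) ->
  grid_count n (fun x => cols x && negb (crosses_col_vertically k A P x)) *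
  grid_count n (fun y => rows y && negb (crosses_row_horizontally k A P y)) <= uncovered P.
Proof.
  intros Hcov. unfold uncovered, grid_count. rewrite rsum_mul.
  apply rsum_le; intros x _. apply rsum_le; intros y _.
  specialize (Hcov x y).
  destruct (cols x && negb (crosses_col_vertically k A P x)) eqn:Ex; simpl b2R; [|lra].
  destruct (rows y && negb (crosses_row_horizontally k A P y)) eqn:Ey; simpl b2R; [|lra].
  apply andb_prop in Ex as [_ Ex]. apply andb_prop in Ey as [_ Ey].
  rewrite coverage_free; [lra| |]; now apply negb_true_iff.
Qed.

(* Either half of the rows of p are crossed by horizontal rectangles, or half of the
   columns of q by vertical ones, or half of each are free. *)
Lemma uncovered_ge_mixed P p q :
  (forall r, In r P -> well_placed r) -> (forall x y, coverage k A P x y <= 1) ->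
  In p P -> vertical p -> In q P -> horizontal q ->
  row_gap * ((L - M - 1) / 2) <= uncovered P \/
  (L - M - 1) / 2 * ((L - M - 1) / 2) <= uncovered P.
Proof.
  intros Hwp Hcov Hp Hpv Hq Hqh.
  pose proof (uncovered_ge_crossed_rows P p Hwp Hcov Hp Hpv) as HBY.
  pose proof (uncovered_ge_crossed_cols P q Hwp Hcov Hq Hqh) as HBX.
  pose proof (uncovered_ge_free P (memX k A q) (memY k A p) Hcov) as HGG.
  set (BY := grid_count n _) in HBY. set (BX := grid_count n _) in HBX.
  set (GX := grid_count n _) in HGG. set (GY := grid_count n _) in HGG.
  destruct (Hwp p Hp) as (_ & _ & Hpy0 & Hpy1 & Hpdim & _).
  destruct (Hwp q Hq) as (Hqx0 & Hqx1 & _ & _ & _ & Hqdim).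
  destruct (Hpdim Hpv) as [_ Hph]. destruct (Hqdim Hqh) as [Hqw _].
  assert (HY : L - M - 1 <= BY + GY).
  { unfold BY, GY. rewrite <- (grid_count_split n (memY k A p)).
    change (L - M - 1 <= lattice_count n (pl_y p) (placed_h k A p)).
    pose proof (lattice_count_ge n _ _ Hpy0 Hpy1). lra. }
  assert (HX : L - M - 1 <= BX + GX).
  { unfold BX, GX. rewrite <- (grid_count_split n (memX k A q)).
    change (L - M - 1 <= lattice_count n (pl_x q) (placed_w k A q)).
    pose proof (lattice_count_ge n _ _ Hqx0 Hqx1). lra. }
  assert (0 <= BY /\ 0 <= GY /\ 0 <= BX /\ 0 <= GX) by (repeat split; apply grid_count_nonneg).
  assert (0 <= GX * GY) by (apply Rmult_le_pos; lra).
  destruct (Rle_dec 0 row_gap); [|left; nra].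
  destruct (Rle_dec ((L - M - 1) / 2) BY); [left; nra|].
  destruct (Rle_dec ((L - M - 1) / 2) BX); [left; nra|].
  right. apply Rle_trans with (GX * GY); [apply Rmult_le_compat|]; lra.
Qed.

End NearlyUniformPackings.

Section InstanceArithmetic.
Variables (m K t N s L : R).
Hypothesis m_ge_1 : 1 <= m.
Hypothesis K_ge_9 : 9 <= K.
Hypothesis K_odd : K = 2 * t + 1.
Hypothesis N_def : N = 2 * m * K ^ 4.
Hypothesis s_def : s = 2 * m * K ^ 3.
Hypothesis L_def : L = m * K ^ 4.

Lemma K_cube_ge : 81 * K <= K ^ 3.
Proof. replace (K ^ 3) with (K * K * K) by ring. nra. Qed.

Lemma instance_row_conditions :
  1 <= s - m /\ s <= L /\ N + 1 < 2 * (L - m - 1) + (s - m - 1) /\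
  N + 1 < (L - m - 1) + (t + 1) * (s - m - 1).
Proof.
  subst N s L. pose proof K_cube_ge.
  assert (E4 : K ^ 4 = K ^ 3 * K) by ring.
  assert (729 * m <= m * K ^ 3) by nra.
  rewrite E4. repeat split; nra.
Qed.

Lemma instance_row_gap_ge : m * K ^ 3 / 2 <= N + 1 - (L + m + 1) - t * (s + m + 1).
Proof.
  subst N s L. pose proof K_cube_ge.
  replace (2 * m * K ^ 4 + 1 - (m * K ^ 4 + m + 1) - t * (2 * m * K ^ 3 + m + 1))
    with (m * K ^ 3 - (t + 1) * m - t) by (rewrite K_odd; ring).
  assert (t * m <= K * m) by nra. nra.
Qed.

Lemma instance_long_side_ge : m * K ^ 4 / 2 <= L - m - 1.
Proof.
  subst L. pose proof K_cube_ge. replace (K ^ 4) with (K ^ 3 * K) by ring.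
  assert (729 * m <= m * K ^ 3) by nra.
  assert (729 * 9 * m <= m * K ^ 3 * K) by nra. nra.
Qed.

Lemma instance_area_bound :
  (N + 1) * (N + 1) - 2 * K * ((s - m - 1) * (L - m - 1)) <= 6 * (m * m * K ^ 5).
Proof.
  subst N s L. pose proof K_cube_ge.
  set (X := m * K ^ 3 * K).
  assert (729 * m <= m * K ^ 3) by nra.
  assert (HX : 6561 <= X) by (unfold X; nra).
  replace ((2 * m * K ^ 4 + 1) * (2 * m * K ^ 4 + 1)
           - 2 * K * ((2 * m * K ^ 3 - m - 1) * (m * K ^ 4 - m - 1)))
    with (4 * X + 1 + 4 * X * (m + 1) + 2 * (m + 1) * X * K - 2 * K * (m + 1) * (m + 1))
    by (unfold X; ring).
  replace (m * m * K ^ 5) with (m * X * K) by (unfold X; ring).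
  assert (X <= m * X) by nra. assert (9 * (m * X) <= m * X * K) by nra.
  assert ((m + 1) * X * K <= 2 * (m * X * K)) by nra.
  assert (1 <= m * X * K) by nra.
  assert (0 <= K * (m + 1) * (m + 1)) by nra.
  nra.
Qed.

Lemma instance_area_gap :
  (N + 1) * (N + 1) - 2 * K * ((s - m - 1) * (L - m - 1)) <
    (N + 1 - (L + m + 1) - t * (s + m + 1)) * ((L - m - 1) / 2) /\
  (N + 1) * (N + 1) - 2 * K * ((s - m - 1) * (L - m - 1)) < (L - m - 1) / 2 * ((L - m - 1) / 2).
Proof.
  pose proof instance_area_bound. pose proof instance_row_gap_ge. pose proof instance_long_side_ge.
  pose proof K_cube_ge.
  set (Y := m * m * K ^ 5) in *.
  assert (HY : 0 < Y) by (unfold Y; repeat apply Rmult_lt_0_compat; try apply pow_lt; lra).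
  split.
  - apply Rlt_le_trans with ((m * K ^ 3 / 2) * (m * K ^ 4 / 4)); [|apply Rmult_le_compat; nra].
    replace ((m * K ^ 3 / 2) * (m * K ^ 4 / 4)) with (Y * (K * K) / 8) by (unfold Y; field).
    assert (81 <= K * K) by nra. nra.
  - apply Rlt_le_trans with ((m * K ^ 4 / 4) * (m * K ^ 4 / 4)); [|apply Rmult_le_compat; nra].
    replace ((m * K ^ 4 / 4) * (m * K ^ 4 / 4)) with (Y * K ^ 3 / 16) by (unfold Y; field).
    assert (729 <= K ^ 3) by lra. nra.
Qed.
End InstanceArithmetic.

Lemma nth_le_maxA A i : (nth i A 0 <= maxA A)%nat.
Proof. revert i; induction A as [|a A IH]; intros [|i]; simpl; try lia. specialize (IH i). lia. Qed.

Lemma instance_well_placed k A r : inside_K k A r ->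
  well_placed k A (2 * maxA A * k ^ 4) (bigN k A / INR k) (bigN k A / 2) (INR (maxA A)) r.
Proof.
  intros Hin.
  assert (He : 0 <= elt A (pl_item r) <= INR (maxA A))
    by (split; [apply pos_INR | apply le_INR, nth_le_maxA]).
  unfold inside_K in Hin. unfold well_placed, vertical, horizontal.
  change (INR (2 * maxA A * k ^ 4)) with (bigN k A).
  unfold placed_w, placed_h, item_w, item_h in *.
  destruct (pl_rot r), (snd (pl_item r)); repeat split; intros; easy || lra.
Qed.

Theorem mainTheorem11 (k : nat) (A : list nat) (P : list placement) :
  (9 <= k)%nat -> Nat.odd k = true ->
  (forall a, In a A -> (0 < a)%nat) ->
  feasible_packing k A P ->
  length P = (2 * k)%nat ->
  ~ ((exists p, In p P /\ horizontal p) /\ (exists q, In q P /\ vertical q)).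
Proof.
  intros Hk Hodd Hpos (_ & Hidx & Hin & Hdisj) Hlen [[q [Hq Hqh]] [p [Hp Hpv]]].
  destruct (proj1 (Nat.odd_spec k) Hodd) as [t Ht].
  assert (Hm : 1 <= INR (maxA A)).
  { apply (le_INR 1). pose proof (Hpos _ (nth_In A 0%nat (Hidx p Hp))).
    pose proof (nth_le_maxA A (fst (pl_item p))). lia. }
  assert (HK : 9 <= INR k) by (apply (le_INR 9) in Hk; simpl in Hk; lra).
  assert (HKt : INR k = 2 * INR t + 1) by (rewrite Ht, plus_INR, mult_INR; simpl; lra).
  set (m := INR (maxA A)) in *. set (n := (2 * maxA A * k ^ 4)%nat).
  assert (HN : INR n = 2 * m * INR k ^ 4) by (unfold n, m; rewrite !mult_INR, pow_INR; simpl; lra).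
  assert (Hs : bigN k A / INR k = 2 * m * INR k ^ 3) by (change (bigN k A) with (INR n); rewrite HN; field; apply Rgt_not_eq; lra).
  assert (HL : bigN k A / 2 = m * INR k ^ 4) by (change (bigN k A) with (INR n); rewrite HN; field).
  destruct (instance_row_conditions _ _ _ _ _ _ Hm HK HKt HN Hs HL) as (H1 & H2 & H3 & H4).
  destruct (instance_area_gap _ _ _ _ _ _ Hm HK HKt HN Hs HL) as [Hgap1 Hgap2].
  assert (Hwp : forall r, In r P -> well_placed k A n (bigN k A / INR k) (bigN k A / 2) m r)
    by (intros r Hr; apply instance_well_placed, Hin, Hr).
  assert (Hcov : forall x y, coverage k A P x y <= 1) by (intros; now apply coverage_le_1).
  pose proof (uncovered_le_area _ _ _ _ _ _ H1 H2 P Hwp) as Hup.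
  rewrite Hlen, mult_INR in Hup. simpl INR in Hup.
  destruct (uncovered_ge_mixed _ _ _ t _ _ _ H1 H2 H3 H4 P p q Hwp Hcov Hp Hpv Hq Hqh) as [Hlow|Hlow];
    unfold row_gap in Hlow; lra.
Qed.
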